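(* Let $\mathbb{T}=t_0t_1t_2\cdots\in\{0,1\}^\omega$ be the Thue–Morse word, where $t_n$ is the sum modulo 2 of the binary digits of $n$. Define $\varphi':\{0,1\}^+\to\{0,1,2\}$ by $\varphi'(u)=0$ if $u$ is a prefix of $\mathbb{T}$ ending with $0$, $\varphi'(u)=1$ if $u$ is a prefix of $\mathbb{T}$ ending with $1$, and $\varphi'(u)=2$ otherwise. Then $\mathbb{T}$ admits no $\varphi'$-monochromatic factorization.
   Context: A factorization $x=V_0V_1V_2\cdots$ with all $V_i$ non-empty finite words is $\varphi$-monochromatic if there is a color $c$ with $\varphi(V_i)=c$ for all $i\ge0$. *)

(* Words over {0,1} are encoded as bool (0 = false, 1 = true). *)
From mathcomp Require Import all_boot.
Set Implicit Arguments. Unset Strict Implicit. Unset Printing Implicit Defensive.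

(* Sum of binary digits of n; the fuel argument (initialised to n) is always
   sufficient since n %/ 2 < n for n > 0. *)
Fixpoint bin_digit_sum_aux (fuel n : nat) : nat :=
  match fuel with
  | 0 => 0
  | k.+1 => (n %% 2) + bin_digit_sum_aux k (n %/ 2)
  end.
Definition bin_digit_sum (n : nat) : nat := bin_digit_sum_aux n n.

Definition thue_morse (n : nat) : bool := odd (bin_digit_sum n).

Definition inf_prefix (x : nat -> bool) (n : nat) : seq bool := mkseq x n.

Definition is_prefix_of (u : seq bool) (x : nat -> bool) : bool :=
  u == inf_prefix x (size u).

Definition phi' (u : seq bool) : nat :=
  if (size u > 0) && is_prefix_of u thue_morse then
    (if last false u then 1 else 0)
  else 2.

Definition is_factorization (x : nat -> bool) (V : nat -> seq bool) : Prop :=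
  (forall i, 0 < size (V i)) /\
  (forall n, let w := flatten [seq V i | i <- iota 0 n] in
             w = inf_prefix x (size w)).

Definition monochromatic (phi : seq bool -> nat) (V : nat -> seq bool) : Prop :=
  exists c, forall i, phi (V i) = c.

From mathcomp Require Import all_boot zify.

Set Implicit Arguments.
Unset Strict Implicit.
Unset Printing Implicit Defensive.

(* If T = V_0 V_1 ... with every V_i a prefix of T ending with the letter c,
   then every cut point s_i = |V_0 ... V_{i-1}| is even: for c = 0 an odd cut
   would put two equal letters t_{2m}, t_{2m+1} side by side, and for c = 1
   odd cuts would force blocks "01" in a row, which yields three equal
   consecutive letters of T.  Halving all cut points (using t_{2k} = t_k and
   t_{2k+1} = 1 - t_k) gives a factorization of the same kind with the
   opposite letter c, and the first cut s_1 strictly decreases, so no such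
   factorization exists. *)

Lemma bin_digit_sum_aux0 f : bin_digit_sum_aux f 0 = 0.
Proof. by elim: f => //= f ->. Qed.

Lemma bin_digit_sum_aux_fuel f g n : n <= f -> n <= g ->
  bin_digit_sum_aux f n = bin_digit_sum_aux g n.
Proof.
elim: f g n => [|f IHf] [|g] n /= le_nf le_ng.
- by [].
1,2: by have -> : n = 0 by [lia]; rewrite bin_digit_sum_aux0.
by rewrite (IHf g) //; lia.
Qed.

Lemma thue_morse_double k : thue_morse (2 * k) = thue_morse k.
Proof.
rewrite /thue_morse /bin_digit_sum; case: k => [|k] //.
have -> : 2 * k.+1 = (2 * k.+1).-1.+1 by lia.
rewrite /=.
have -> : (2 * k.+1).-1.+1 %% 2 = 0 by lia.
have -> : (2 * k.+1).-1.+1 %/ 2 = k.+1 by lia.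
by rewrite add0n (bin_digit_sum_aux_fuel (g := k.+1)) //; lia.
Qed.

Lemma thue_morse_doubleS k : thue_morse (2 * k).+1 = ~~ thue_morse k.
Proof.
rewrite /thue_morse /bin_digit_sum /=.
have -> : (2 * k).+1 %% 2 = 1 by lia.
have -> : (2 * k).+1 %/ 2 = k by lia.
by rewrite (bin_digit_sum_aux_fuel (g := k)) //; lia.
Qed.

Lemma even_double_half m : ~~ odd m -> m = 2 * m./2.
Proof. by move=> /negbTE m_even; move: (odd_double_half m); rewrite m_even -muln2; lia. Qed.

Lemma thue_morse_succ_even m : ~~ odd m -> thue_morse m.+1 = ~~ thue_morse m.
Proof. by move=> /even_double_half ->; rewrite thue_morse_doubleS thue_morse_double. Qed.

Lemma thue_morse_no_triple_letter m :
  ~ (thue_morse m = thue_morse m.+1 /\ thue_morse m.+1 = thue_morse m.+2).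
Proof.
case=> eq01 eq12; case: (boolP (odd m)) => [m_odd | m_even].
- by move: eq12; rewrite (@thue_morse_succ_even m.+1) /= ?m_odd //; case: thue_morse.
- by move: eq01; rewrite (thue_morse_succ_even m_even); case: thue_morse.
Qed.

(* [s] lists the cut points of a factorization of the Thue--Morse word into
   prefixes of itself, each ending with the letter [c]. *)
Record prefix_cuts (c : bool) (s : nat -> nat) : Prop := PrefixCuts {
  cuts0 : s 0 = 0;
  cuts_lt i : s i < s i.+1;
  cuts_block i j : j < s i.+1 - s i -> thue_morse (s i + j) = thue_morse j;
  cuts_last i : thue_morse (s i.+1 - s i).-1 = c
}.
Arguments cuts_block {c s} _ i j.

Section PrefixCuts.

Variables (c : bool) (s : nat -> nat).
Hypothesis cuts : prefix_cuts c s.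

Lemma prefix_cuts_first_letter i : thue_morse (s i) = false.
Proof. by have := cuts_block cuts i 0; rewrite addn0; apply; have := cuts_lt cuts i; lia. Qed.

Lemma prefix_cuts_last_letter i : thue_morse (s i.+1).-1 = c.
Proof.
have lt_i := cuts_lt cuts i.
have := cuts_block cuts i (s i.+1 - s i).-1; rewrite (cuts_last cuts).
by move=> <-; [congr thue_morse | ]; lia.
Qed.

Lemma prefix_cuts_false_even : c = false -> forall i, ~~ odd (s i).
Proof.
move=> c0 [|i]; first by rewrite (cuts0 cuts).
apply/negP => s_odd; have lt_i := cuts_lt cuts i.
have pred_even : ~~ odd (s i.+1).-1 by move: s_odd; case: (s i.+1).
have := thue_morse_succ_even pred_even.
have -> : (s i.+1).-1.+1 = s i.+1 by lia.
by rewrite prefix_cuts_first_letter prefix_cuts_last_letter c0.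
Qed.

Section LastLetterOne.

Hypothesis c1 : c = true.

Lemma prefix_cuts_true_block_size i : 2 <= s i.+1 - s i.
Proof.
have := cuts_lt cuts i; have := cuts_last cuts i; rewrite c1.
by case: (s i.+1 - s i) => [|[|d]] //; lia.
Qed.

Lemma prefix_cuts_true_second_letter i : thue_morse (s i).+1 = true.
Proof.
have := cuts_block cuts i 1; rewrite addn1; apply.
by have := prefix_cuts_true_block_size i; lia.
Qed.

(* An odd cut is followed by the block "01": a third letter would repeat the
   second one across the aligned pair starting at the even position s_i + 1. *)
Lemma prefix_cuts_true_odd_step i : odd (s i) -> s i.+1 = (s i).+2.
Proof.
move=> s_odd; have := prefix_cuts_true_block_size i.
case: (ltnP 2 (s i.+1 - s i)) => long short; last by lia.
have := @thue_morse_succ_even (s i).+1; rewrite /= s_odd => /(_ isT).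
have := cuts_block cuts i 2 long; rewrite addn2 => ->.
by rewrite prefix_cuts_true_second_letter.
Qed.

Lemma prefix_cuts_true_even i : ~~ odd (s i).
Proof.
apply/negP => s_odd.
have s1 := prefix_cuts_true_odd_step s_odd.
have s1_odd : odd (s i.+1) by rewrite s1 /= negbK.
have s2 := prefix_cuts_true_odd_step s1_odd.
have [m s_i1] : exists m, (s i).+1 = 2 * m.
  by exists (s i).+1./2; apply: even_double_half; rewrite /= s_odd.
apply: (@thue_morse_no_triple_letter m).
rewrite -[thue_morse m]thue_morse_double -[thue_morse m.+1]thue_morse_double.
rewrite -[thue_morse m.+2]thue_morse_double -s_i1.
have -> : 2 * m.+1 = (s i.+1).+1 by lia.
have -> : 2 * m.+2 = (s i.+2).+1 by lia.
by rewrite !prefix_cuts_true_second_letter.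
Qed.

End LastLetterOne.

Lemma prefix_cuts_even i : ~~ odd (s i).
Proof. by case: c prefix_cuts_true_even prefix_cuts_false_even cuts => [->|_ ->]. Qed.

Lemma prefix_cuts_half h : (forall i, s i = 2 * h i) -> prefix_cuts (~~ c) h.
Proof.
move=> s_dbl; have lt_i i : h i < h i.+1 by have := cuts_lt cuts i; rewrite !s_dbl; lia.
split=> [|i|i j lt_j|i] //.
- by have := cuts0 cuts; rewrite s_dbl; lia.
- rewrite -thue_morse_double -[thue_morse j]thue_morse_double mulnDr -s_dbl.
  by apply: (cuts_block cuts); rewrite !s_dbl; lia.
- have := cuts_last cuts i; rewrite !s_dbl.
  have -> : (2 * h i.+1 - 2 * h i).-1 = (2 * (h i.+1 - h i).-1).+1 by have := lt_i i; lia.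
  by rewrite thue_morse_doubleS => <-; rewrite negbK.
Qed.

End PrefixCuts.

Lemma no_prefix_cuts c s : ~ prefix_cuts c s.
Proof.
elim/ltn_ind: (s 1) {-2}s (erefl (s 1)) c => n IHn {}s s1 c cuts.
have s_dbl i := even_double_half (prefix_cuts_even cuts i).
apply: (IHn _ _ _ erefl _ (prefix_cuts_half cuts s_dbl)).
by have := s_dbl 1; have := cuts_lt cuts 0; rewrite (cuts0 cuts) -s1; lia.
Qed.

Section MonochromaticFactorization.

Variable V : nat -> seq bool.
Hypotheses (fact : is_factorization thue_morse V) (mono : monochromatic phi' V).

Let F i := flatten [seq V k | k <- iota 0 i].

Lemma factor_rcons i : F i.+1 = F i ++ V i.
Proof. by rewrite /F -addn1 iotaD map_cat flatten_cat /= cats0. Qed.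

Lemma factor_prefix i : F i = inf_prefix thue_morse (size (F i)).
Proof. exact: fact.2. Qed.

Lemma factor_nth i j : j < size (V i) ->
  nth false (V i) j = thue_morse (size (F i) + j).
Proof.
move=> lt_j; have := congr1 (nth false ^~ (size (F i) + j)) (factor_prefix i.+1).
rewrite /= factor_rcons nth_cat ltnNge leq_addr /= addKn => ->.
by rewrite /inf_prefix nth_mkseq // size_cat; lia.
Qed.

(* V_0 is a prefix of T, so its color is not 2; hence no V_i has color 2. *)
Lemma factor_is_prefix i : is_prefix_of (V i) thue_morse.
Proof.
have V0_prefix : V 0 = inf_prefix thue_morse (size (V 0)).
  by have := factor_prefix 1; rewrite factor_rcons.
have [col col_eq] := mono.
have : phi' (V i) != 2.
  by rewrite col_eq -(col_eq 0) /phi' fact.1 /is_prefix_of -V0_prefix eqxx; case: last.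
by rewrite /phi' fact.1; case: is_prefix_of.
Qed.

Lemma factor_nth_prefix i j : j < size (V i) -> nth false (V i) j = thue_morse j.
Proof. by move=> lt_j; rewrite (eqP (factor_is_prefix i)) /inf_prefix nth_mkseq. Qed.

Lemma factor_last i : last false (V i) = last false (V 0).
Proof.
have [col col_eq] := mono; have := col_eq i; rewrite -(col_eq 0) /phi'.
by rewrite !fact.1 !factor_is_prefix; do 2!case: last.
Qed.

Lemma monochromatic_factorization_prefix_cuts :
  prefix_cuts (last false (V 0)) (fun i => size (F i)).
Proof.
have size_V i := fact.1 i.
split=> [|i|i j|i]; rewrite ?factor_rcons ?size_cat ?addKn //.
- by have := size_V i; lia.
- by move=> lt_j; rewrite -factor_nth // factor_nth_prefix.
- rewrite -(factor_last i) -nth_last factor_nth_prefix //; have := size_V i; lia.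
Qed.

End MonochromaticFactorization.

Theorem mainTheorem11 :
  ~ (exists V : nat -> seq bool,
        is_factorization thue_morse V /\ monochromatic phi' V).
Proof.
case=> V [fact mono].
exact: no_prefix_cuts (monochromatic_factorization_prefix_cuts fact mono).
Qed.
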